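(* Let $\mathbf{S}=(S_n)_{n\in\mathbb{N}}$ be a stationary ergodic information source with finite (totally ordered) alphabet $A$. Then the permutation entropy rate \[ h_m^{*}(\mathbf{S})=\lim_{L\to\infty}\frac{1}{L-1}H_m(R_1^L) \] exists and equals the metric entropy rate $h_m(\mathbf{S})=\lim_{L\to\infty}\frac{1}{L}H_m(S_1^L)$.
   Context: A finite-alphabet information source is a discrete-time stochastic process $\mathbf{S}=(S_n)_{n\in\mathbb{N}}$ with values in a finite totally ordered alphabet $A$; stationarity and ergodicity refer to its sequence-space model $(A^{\mathbb{N}},\mathcal{Z},m,\sigma)$, where $m$ is the induced shift-invariant distribution on output sequences and $\sigma$ the left shift. The rank variables are $R_n=\sum_{i=1}^{n}\delta(S_i\le S_n)$, $n\ge1$, where $\delta(P)=1$ if the proposition $P$ holds and $0$ otherwise; $R_1^L=R_1\cdots R_L$ and $S_1^L=S_1\cdots S_L$. $H_m(Z)=-\sum_z\Pr(z)\log_2\Pr(z)$ is the Shannon entropy of a discrete random variable (or word) $Z$. The quantity $\frac{1}{L-1}H_m(R_1^L)$ is the permutation entropy of order $L\ge 2$, equivalently the entropy of the distribution of order patterns (permutations) of the block $S_1^L$ divided by $L-1$. *)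

From HB Require Import structures.
From mathcomp Require Import all_boot all_order all_algebra.
From mathcomp Require Import all_classical all_reals all_analysis.
Set Implicit Arguments. Unset Strict Implicit. Unset Printing Implicit Defensive.
Import Order.TTheory GRing.Theory Num.Theory.
Local Open Scope classical_set_scope.
Local Open Scope ring_scope.

(* Binary logarithm (ln 0 = 0 in MathComp-Analysis, so 0 * log2 0 = 0). *)
Definition log2 {R : realType} (x : R) : R := ln x / ln 2.

Definition entropy {R : realType} {d} {Omega : measurableType d}
  (P : probability Omega R) {T : finType} (X : Omega -> T) : R :=
  - \sum_(t : T) (fine (P (X @^-1` [set t])) * log2 (fine (P (X @^-1` [set t])))).

Definition cylinders (A : Type) : set (set (nat -> A)) :=
  [set C | exists (L : nat) (w : 'I_L -> A), C = [set x : nat -> A | forall i : 'I_L, x i = w i]].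

Definition seq_measurable (A : Type) : set (set (nat -> A)) := <<s (@cylinders A) >>.

Definition shift (A : Type) (x : nat -> A) : nat -> A := fun n => x n.+1.

(* Sample path of the process (0-indexed: S 0 is S_1 of the paper). *)
Definition path_of {Omega A : Type} (S : nat -> Omega -> A) (w : Omega) : nat -> A :=
  fun n => S n w.

(* Measurability of each S_n (A carries the discrete sigma-algebra). *)
Definition is_source {d} {Omega : measurableType d}
  (A : finType) (S : nat -> Omega -> A) : Prop :=
  forall n (a : A), measurable (S n @^-1` [set a]).

(* Stationarity: the induced distribution m on A^N is shift-invariant,
   m (sigma^-1 B) = m B for all B in Z. *)
Definition stationary {R : realType} {d} {Omega : measurableType d}
  (P : probability Omega R) (A : Type) (S : nat -> Omega -> A) : Prop :=
  forall B : set (nat -> A), seq_measurable B ->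
    P [set w | B (shift (path_of S w))] = P [set w | B (path_of S w)].

Definition ergodic {R : realType} {d} {Omega : measurableType d}
  (P : probability Omega R) (A : Type) (S : nat -> Omega -> A) : Prop :=
  forall B : set (nat -> A), seq_measurable B ->
    (@shift A @^-1` B = B) ->
    P [set w | B (path_of S w)] = 0%E \/ P [set w | B (path_of S w)] = 1%E.

(* Rank variables, 0-indexed: rank S k w = R_{k+1}
   = #{ i in {1..k+1} : S_i <= S_{k+1} }. *)
Definition rank {disp} {A : finOrderType disp} {Omega : Type}
  (S : nat -> Omega -> A) (k : nat) (w : Omega) : nat :=
  #|[set i : 'I_k.+1 | (S i w <= S k w)%O]|.

(* The rank word R_1^L (ranks are <= L, hence fit in 'I_L.+1). *)
Definition rank_word {disp} {A : finOrderType disp} {Omega : Type}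
  (S : nat -> Omega -> A) (L : nat) (w : Omega) : {ffun 'I_L -> 'I_L.+1} :=
  [ffun i : 'I_L => inord (rank S i w)].

Definition sym_word {A : finType} {Omega : Type}
  (S : nat -> Omega -> A) (L : nat) (w : Omega) : {ffun 'I_L -> A} :=
  [ffun i : 'I_L => S i w].

From Pilot Require Import Defs.
From HB Require Import structures.
From mathcomp Require Import all_boot all_order all_algebra.
From mathcomp Require Import all_classical all_reals all_analysis.
From mathcomp Require Import lra ring.
Import Order.TTheory GRing.Theory Num.Theory numFieldNormedType.Exports.
Local Open Scope classical_set_scope.
Local Open Scope ring_scope.

(* By stationarity and subadditivity of joint entropy, L |-> H(S_1^L) is
   subadditive, so Fekete's lemma gives the limit h of H(S_1^L)/L.  The rank
   word R_1^L is a function of S_1^L; conversely S_1^L is determined by R_1^L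
   together with the position of the first occurrence of each symbol, which
   takes at most (L+1)^|A| values.  Hence
     H(R_1^L) <= H(S_1^L) <= H(R_1^L) + |A| log2 (L+1),
   and the logarithmic gap disappears after division by L - 1. *)

Section SubadditiveLimit.
Context {R : realType}.
Implicit Types u : nat -> R.

Lemma subadditive_iter u m : (forall i j, u (i + j)%N <= u i + u j) ->
  forall q r, u (q * m + r)%N <= u r + q%:R * u m.
Proof.
move=> usub; elim=> [|q IH] r; first by rewrite mul0n add0n mul0r addr0.
rewrite mulSn -addnA (le_trans (usub _ _)) // (le_trans (lerD (lexx _) (IH r))) //.
by rewrite mulrSr mulrDl mul1r; lra.
Qed.

Lemma eventually_div_le (C e : R) : 0 < e -> \forall n \near \oo, C / n.+1%:R <= e.
Proof.
move=> e0; near=> n.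
have : `|C * 0 - C * harmonic n| <= e.
  by near: n; exact: cvgr_dist_le _ _ (cvgMl_tmp cvg_harmonic) e e0.
by rewrite mulr0 sub0r normrN; apply: le_trans; exact: ler_norm.
Unshelve. all: by end_near.
Qed.

Lemma fekete u : (forall n, 0 <= u n) -> (forall m n, u (m + n)%N <= u m + u n) ->
  exists h : R, (fun n => u n.+1 / n.+1%:R) @ \oo --> h.
Proof.
move=> u0 usub; pose v n := u n.+1 / n.+1%:R.
have infE : has_inf (range v).
  by split; [exists (v 0%N), 0%N | exists 0 => _ [n _ <-]; exact: divr_ge0].
have inf_le n : inf (range v) <= v n by apply: (ge_inf infE.2); exists n.
exists (inf (range v)); apply/cvgrPdist_le => e e0.
have [_ [m _ <-] vm] := inf_adherent (divr_gt0 e0 (ltr0n R 2)) infE.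
pose C := \sum_(r < m.+1) u r.
have uC r : (r < m.+1)%N -> u r <= C.
  move=> rm; rewrite /C (bigD1 (Ordinal rm)) //= lerDl.
  by apply: sumr_ge0 => i _.
have Ce := eventually_div_le C (e / 2) (divr_gt0 e0 (ltr0n R 2)).
apply: filterS Ce => n Cn.
have n0 : 0 < n.+1%:R :> R by rewrite ltr0n.
rewrite ler0_norm ?subr_le0; last exact: inf_le.
rewrite opprB lerBlDl /v ler_pdivrMr //.
have := subadditive_iter u m.+1 usub (n.+1 %/ m.+1) (n.+1 %% m.+1); rewrite -divn_eq.
move/le_trans; apply.
have rem_le : u (n.+1 %% m.+1)%N <= e / 2 * n.+1%:R.
  apply: le_trans (uC _ (ltn_pmod _ (ltn0Sn _))) _.
  by rewrite -ler_pdivrMr.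
have quo_le : (n.+1 %/ m.+1)%:R * u m.+1 <= v m * n.+1%:R.
  rewrite /v [_ * u _]mulrC -mulrA; apply: ler_wpM2l; first exact: u0.
  by rewrite mulrC ler_pdivlMr ?ltr0n // -natrM ler_nat leq_trunc_div.
have := ler_wpM2r (ltW n0) (ltW vm); lra.
Qed.

End SubadditiveLimit.

Section LogarithmicCorrection.
Context {R : realType}.

Lemma ln_le_add_div {x M : R} : 0 < x -> 0 < M -> ln x <= ln M + x / M.
Proof.
move=> x0 M0; have := ln_sublinear (divr_gt0 x0 M0).
rewrite ln_div ?posrE //; lra.
Qed.

Lemma cvg_ln_div_nat : (fun n => ln n.+1%:R / n.+1%:R) @ \oo --> (0 : R).
Proof.
apply/cvgrPdist_le => e e0.
have e20 : 0 < e / 2 by rewrite divr_gt0.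
pose M := (e / 2)^-1.
have M0 : 0 < M by rewrite invr_gt0.
apply: filterS (eventually_div_le (ln M) _ e20) => n lnM.
have n0 : 0 < n.+1%:R :> R by rewrite ltr0n.
have lnn0 : 0 <= ln n.+1%:R :> R by rewrite ln_ge0 // ler1n.
rewrite sub0r normrN ger0_norm ?divr_ge0 // ler_pdivrMr //.
move: lnM; rewrite ler_pdivrMr // => lnM.
have := ln_le_add_div n0 M0; rewrite /M invrK; nra.
Qed.

Lemma cvg_ratio_shift (x : nat -> R) (h : R) :
  (fun n => x n.+1 / n.+1%:R) @ \oo --> h ->
  (fun n => x n.+2 / n.+1%:R) @ \oo --> h.
Proof.
move=> xh.
have -> : (fun n => x n.+2 / n.+1%:R) =
    (fun n => x n.+2 / n.+2%:R * (1 + harmonic n)).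
  apply/funext => n /=; rewrite -[n.+2]addn1 natrD; field.
  by have := ler0n R n; rewrite !gt_eqF //; lra.
rewrite (_ : h = h * (1 + 0)); last by rewrite addr0 mulr1.
apply: cvgM.
  by have := xh; rewrite -cvg_shiftS.
exact: cvgD (cvg_cst _) cvg_harmonic.
Qed.

Lemma cvg_ratio_sandwich (a r : nat -> R) (h c : R) :
  (fun n => a n.+1 / n.+1%:R) @ \oo --> h ->
  (forall n, r n <= a n) -> (forall n, a n <= r n + c * ln n.+1%:R) ->
  (fun n => r n.+1 / n.+1%:R) @ \oo --> h.
Proof.
move=> ah ra ar.
have lnh : (fun n => a n.+1 / n.+1%:R - c * (ln n.+2%:R / n.+1%:R)) @ \oo --> h.
  rewrite -[h]subr0 -(mulr0 c); apply: cvgB (ah) _; apply: cvgMl_tmp.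
  apply: (cvg_ratio_shift (fun n => ln n%:R)).
  exact: cvg_ln_div_nat.
apply: squeeze_cvgr lnh ah; apply: nearW => n.
have n0 : 0 < n.+1%:R :> R by rewrite ltr0n.
rewrite mulrA -mulrBl !ler_pM2r ?invr_gt0 //.
by rewrite lerBlDr ar ra.
Qed.

End LogarithmicCorrection.

Lemma mul_ln_le_sub {R : realType} (p q : R) : 0 <= p -> 0 <= q -> (0 < p -> 0 < q) ->
  p * ln q - p * ln p <= q - p.
Proof.
move=> p0 q0 pq; have [->|pn0] := eqVneq p 0; first by rewrite !mul0r subrr subr0.
have pp : 0 < p by rewrite lt_def pn0.
have qp := pq pp.
have h : -1 < q / p - 1 by rewrite ltrBrDr addrC subrr divr_gt0.
have := le_ln1Dx h; rewrite addrC subrK ln_div ?posrE // => H.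
have -> : q - p = p * (q / p - 1) by field.
by rewrite -mulrBr ler_wpM2l.
Qed.

Lemma ln2_gt0 {R : realType} : 0 < ln (2 : R).
Proof. by rewrite ln_gt0 // ltr1n. Qed.

Lemma ler_log2 {R : realType} (x y : R) : 0 < x -> x <= y -> log2 x <= log2 y.
Proof.
move=> x0 xy; rewrite /log2 ler_wpM2r ?invr_ge0 ?(ltW ln2_gt0) //.
by rewrite ler_ln // posrE (lt_le_trans x0).
Qed.

Section FiniteEntropy.
Context {R : realType} {d : measure_display} {Omega : measurableType d}
  (P : probability Omega R).

Definition pmf {T : finType} (X : Omega -> T) (t : T) : R :=
  fine (P (X @^-1` [set t])).

Definition measurable_fibers {T : finType} (X : Omega -> T) : Prop :=
  forall t, measurable (X @^-1` [set t]).

Section OneVariable.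
Context {T : finType} (X : Omega -> T) (mX : measurable_fibers X).

Lemma entropyE : entropy P X = - \sum_t pmf X t * log2 (pmf X t).
Proof. by []. Qed.

Lemma pmf_ge0 t : 0 <= pmf X t.
Proof. exact/fine_ge0/measure_ge0. Qed.

Lemma pmf_le1 t : pmf X t <= 1.
Proof.
by rewrite -lee_fin fineK ?fin_num_measure //; exact: probability_le1.
Qed.

Lemma measurable_preimage (Q : pred T) : measurable [set w | Q (X w)].
Proof.
rewrite (_ : [set w | Q (X w)] = \big[setU/set0]_(t | Q t) X @^-1` [set t]).
  exact: bigsetU_measurable.
rewrite -bigcup_seq_cond; apply/seteqP; split => [w Qw|w [t /andP[_ Qt] /= ->]] //.
by exists (X w) => //; rewrite /= mem_index_enum.
Qed.

Lemma measure_preimage_seq (s : seq T) : uniq s ->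
  P [set w | X w \in s] = (\sum_(t <- s) P (X @^-1` [set t]))%E.
Proof.
elim: s => [_|t s IH /= /andP[ts us]].
  by rewrite big_nil (_ : [set w | _] = set0) ?measure0 //; apply/seteqP; split.
rewrite big_cons -IH // -measureU //.
- congr (P _); apply/seteqP; split => w /=; rewrite in_cons.
    by case/orP => [/eqP|]; [left|right].
  by case=> [->|->]; rewrite ?eqxx ?orbT.
- exact: (measurable_preimage (fun t => t \in s)).
- by apply/seteqP; split => // w [/= -> sw]; rewrite sw in ts.
Qed.

Lemma pmf_comp {U : finType} (f : T -> U) u :
  pmf (f \o X) u = \sum_(t | f t == u) pmf X t.
Proof.
rewrite /pmf (_ : _ @^-1` _ = [set w | X w \in [seq t <- index_enum T | f t == u]]).
  rewrite measure_preimage_seq ?filter_uniq ?index_enum_uniq // big_filter.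
  by rewrite sum_fine // => t _; rewrite fin_num_measure.
by apply/seteqP; split => w /=; rewrite mem_filter mem_index_enum andbT => /eqP.
Qed.

Lemma sum_pmf : \sum_t pmf X t = 1.
Proof.
have := pmf_comp (fun _ => tt) tt; rewrite /pmf.
rewrite (_ : _ @^-1` _ = setT) ?probability_setT; last by apply/seteqP; split.
by move=> /= <-.
Qed.

Lemma pmf_le_comp {U : finType} (f : T -> U) t : pmf X t <= pmf (f \o X) (f t).
Proof.
rewrite pmf_comp (bigD1 t) //= lerDl.
by apply: sumr_ge0 => i _; exact: pmf_ge0.
Qed.

Lemma measurable_fibers_comp {U : finType} (f : T -> U) : measurable_fibers (f \o X).
Proof.
move=> u; rewrite (_ : _ @^-1` _ = [set w | f (X w) == u]).
  exact: (measurable_preimage (fun t => f t == u)).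
by apply/seteqP; split => w /= /eqP.
Qed.

End OneVariable.

Lemma measurable_fibers_pair {T U : finType} (X : Omega -> T) (Y : Omega -> U) :
  measurable_fibers X -> measurable_fibers Y ->
  measurable_fibers (fun w => (X w, Y w)).
Proof.
move=> mX mY [a b]; rewrite (_ : _ @^-1` _ = X @^-1` [set a] `&` Y @^-1` [set b]).
  exact: measurableI.
by apply/seteqP; split => w /= => [[-> ->] | [-> ->]].
Qed.

Lemma measurable_fibers_ffun {T : finType} n (F : 'I_n -> Omega -> T) :
  (forall i, measurable_fibers (F i)) -> measurable_fibers (fun w => [ffun i => F i w]).
Proof.
move=> mF z; rewrite (_ : _ @^-1` _ = \big[setI/setT]_i F i @^-1` [set z i]).
  by apply: bigsetI_measurable => i _; exact: mF.
apply/seteqP; split => w /=.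
  by move=> <-; rewrite -bigcap_seq_cond => i _ /=; rewrite ffunE.
rewrite -bigcap_seq_cond => Fz; apply/ffunP => i; rewrite ffunE; apply: Fz.
by rewrite /= mem_index_enum.
Qed.

Lemma gibbs_inequality {T : finType} (X : Omega -> T) (q : T -> R) :
  measurable_fibers X -> (forall t, 0 <= q t) -> \sum_t q t <= 1 ->
  (forall t, 0 < pmf X t -> 0 < q t) ->
  entropy P X <= - \sum_t pmf X t * log2 (q t).
Proof.
move=> mX q0 q1 qX; rewrite entropyE lerN2 -subr_le0 -sumrB.
apply: (@le_trans _ _ (\sum_t (q t - pmf X t) / ln 2)).
  apply: ler_sum => t _; rewrite /log2 !mulrA -mulrBl.
  rewrite ler_wpM2r ?invr_ge0 ?(ltW ln2_gt0) //.
  exact: mul_ln_le_sub (pmf_ge0 X t) (q0 t) (qX t).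
rewrite -mulr_suml sumrB sum_pmf // mulr_le0_ge0 ?invr_ge0 ?(ltW ln2_gt0) //.
by rewrite subr_le0.
Qed.

Lemma entropy_ge0 {T : finType} (X : Omega -> T) :
  measurable_fibers X -> 0 <= entropy P X.
Proof.
move=> mX; rewrite entropyE oppr_ge0; apply: sumr_le0 => t _.
rewrite mulr_ge0_le0 ?pmf_ge0 // /log2 mulr_le0_ge0 ?invr_ge0 ?(ltW ln2_gt0) //.
by rewrite ln_le0 // pmf_le1.
Qed.

Lemma entropy_le_log2_card {T : finType} (X : Omega -> T) :
  measurable_fibers X -> entropy P X <= log2 #|T|%:R.
Proof.
move=> mX; have T0 : (0 < #|T|)%N by apply/card_gt0P; exists (X point).
have N0 : 0 < #|T|%:R :> R by rewrite ltr0n.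
apply: le_trans (gibbs_inequality X (fun _ => #|T|%:R^-1) mX _ _ _) _.
- by move=> t; rewrite invr_ge0 ltW.
- by rewrite sumr_const (_ : #|xpredT| = #|T|) // -[X in X <= _]mulr_natr mulVf ?gt_eqF.
- by move=> t _; rewrite invr_gt0.
by rewrite -mulr_suml sum_pmf // mul1r /log2 lnV ?posrE // mulNr opprK.
Qed.

Lemma sum_pmf_log2_comp {T U : finType} (X : Omega -> T) (f : T -> U) :
  measurable_fibers X ->
  \sum_t pmf X t * log2 (pmf (f \o X) (f t)) =
  \sum_u pmf (f \o X) u * log2 (pmf (f \o X) u).
Proof.
move=> mX; under [RHS]eq_bigr => u _ do rewrite {1}(pmf_comp X mX f u) mulr_suml.
by rewrite (partition_big f predT) //=; apply: eq_bigr => u _; apply: eq_bigr => t /eqP <-.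
Qed.

Lemma entropy_comp_le {T U : finType} (X : Omega -> T) (f : T -> U) :
  measurable_fibers X -> entropy P (f \o X) <= entropy P X.
Proof.
move=> mX; rewrite !entropyE lerN2 -(sum_pmf_log2_comp X f mX).
apply: ler_sum => t _; have [->|pn0] := eqVneq (pmf X t) 0; first by rewrite !mul0r.
rewrite ler_wpM2l ?pmf_ge0 // ler_log2 ?pmf_le_comp //.
by rewrite lt_def pn0 pmf_ge0.
Qed.

Lemma entropy_factor_le {T U : finType} (X : Omega -> T) (Y : Omega -> U) (g : U -> T) :
  measurable_fibers Y -> X =1 g \o Y -> entropy P X <= entropy P Y.
Proof. by move=> mY /funext ->; exact: entropy_comp_le. Qed.

Lemma entropy_le_inj_comp {T U : finType} (X : Omega -> T) (h : T -> U) :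
  measurable_fibers X -> injective h -> entropy P X <= entropy P (h \o X).
Proof.
move=> mX hinj; pose g u := if [pick t | h t == u] is Some t then t else X point.
apply: (entropy_factor_le _ _ g); first exact: measurable_fibers_comp.
by move=> w; rewrite /g /=; case: pickP => [t /eqP/hinj //|/(_ (X w))]; rewrite eqxx.
Qed.

Lemma entropy_pair_le {T U : finType} (X : Omega -> T) (Y : Omega -> U) :
  measurable_fibers X -> measurable_fibers Y ->
  entropy P (fun w => (X w, Y w)) <= entropy P X + entropy P Y.
Proof.
move=> mX mY; set Z := fun w => (X w, Y w).
have mZ : measurable_fibers Z by exact: measurable_fibers_pair.
have ZX t : pmf Z t <= pmf X t.1 by exact: (pmf_le_comp Z mZ fst).
have ZY t : pmf Z t <= pmf Y t.2 by exact: (pmf_le_comp Z mZ snd).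
apply: le_trans (gibbs_inequality Z (fun t => pmf X t.1 * pmf Y t.2) mZ _ _ _) _.
- by move=> t; rewrite mulr_ge0 ?pmf_ge0.
- rewrite -(pair_bigA _ (fun a b => pmf X a * pmf Y b)) /=.
  by under eq_bigr => a _ do rewrite -mulr_sumr; rewrite -mulr_suml !sum_pmf // mul1r.
- by move=> t Zt; rewrite mulr_gt0 // (lt_le_trans Zt).
rewrite !entropyE -(sum_pmf_log2_comp Z fst mZ) -(sum_pmf_log2_comp Z snd mZ).
rewrite -opprD -big_split /= lerN2.
rewrite [X in X <= _](eq_bigr (fun t => pmf Z t * log2 (pmf X t.1 * pmf Y t.2))) //.
move=> t _; have [->|pn0] := eqVneq (pmf Z t) 0; first by rewrite !mul0r addr0.
have Zt : 0 < pmf Z t by rewrite lt_def pn0 pmf_ge0.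
rewrite -mulrDr /log2 -mulrDl lnM // posrE.
  exact: lt_le_trans Zt (ZX t).
exact: lt_le_trans Zt (ZY t).
Qed.

End FiniteEntropy.

Lemma g_sigma_algebra_bigcup_count {T : Type} (G : set (set T)) (I : countType)
    (F : I -> set T) :
  (forall i, <<s G >> (F i)) -> <<s G >> (\bigcup_i F i).
Proof.
move=> GF; rewrite (_ : \bigcup_i F i =
    \bigcup_n (if @pickle_inv I n is Some i then F i else set0)).
  apply: sigma_algebra_bigcup => n.
  by case: pickle_inv => [i|]; [exact: GF | exact: sigma_algebra0].
apply/seteqP; split => [x [i _ Fx]|x [n _]].
  by exists (pickle i) => //; rewrite pickleK_inv.
by case: pickle_inv => // i Fx; exists i.
Qed.

Lemma seq_measurable_window {A : finType} (m n : nat) (z : 'I_n -> A) :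
  seq_measurable [set x : nat -> A | forall i : 'I_n, x (m + i)%N = z i].
Proof.
pose cyl (v : {ffun 'I_(m + n) -> A}) :=
  if [forall i, v (rshift m i) == z i]
  then [set x : nat -> A | forall j : 'I_(m + n), x j = v j] else set0.
rewrite (_ : [set x | _] = \bigcup_v cyl v).
  apply: g_sigma_algebra_bigcup_count => v; rewrite /cyl; case: ifP => _.
    by apply: sub_gen_smallest; exists (m + n)%N, v.
  exact: sigma_algebra0.
apply/seteqP; split => [x xz|x [v _]].
  exists [ffun j : 'I_(m + n) => x j] => //; rewrite /cyl ifT.
    by move=> j; rewrite ffunE.
  by apply/forallP => i; rewrite ffunE xz.
rewrite /cyl; case: ifP => // /forallP vz xv i.
by rewrite (xv (rshift m i)); exact/eqP.
Qed.

Section StationaryBlocks.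
Context {R : realType} {d : measure_display} {Omega : measurableType d}
  (P : probability Omega R) {A : finType} (S : nat -> Omega -> A).

Definition window (m n : nat) (w : Omega) : {ffun 'I_n -> A} :=
  [ffun i : 'I_n => S (m + i)%N w].

Lemma sym_word_window n : sym_word S n = window 0 n.
Proof. by []. Qed.

Hypothesis hS : is_source S.

Lemma measurable_fibers_window m n : measurable_fibers (window m n).
Proof. by apply: measurable_fibers_ffun => i a; exact: hS. Qed.

Lemma measurable_fibers_sym_word n : measurable_fibers (sym_word S n).
Proof. by rewrite sym_word_window; exact: measurable_fibers_window. Qed.

Hypothesis hst : stationary P S.

Lemma prob_window_shift m n (z : 'I_n -> A) :
  P [set w | forall i : 'I_n, S (m + i)%N w = z i] =
  P [set w | forall i : 'I_n, S i w = z i].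
Proof.
elim: m => // m <-; set B := [set x : nat -> A | forall i : 'I_n, x (m + i)%N = z i].
have -> : [set w | forall i : 'I_n, S (m.+1 + i)%N w = z i] =
  [set w | B (Defs.shift (path_of S w))] by [].
by rewrite hst //; exact: seq_measurable_window.
Qed.

Lemma entropy_window m n : entropy P (window m n) = entropy P (sym_word S n).
Proof.
suff pmfE z : pmf P (window m n) z = pmf P (window 0 n) z.
  by rewrite !entropyE; under eq_bigr => z _ do rewrite pmfE.
rewrite /pmf; have windowE k : window k n @^-1` [set z] =
    [set w | forall i : 'I_n, S (k + i)%N w = z i].
  apply/seteqP; split => w /=; first by move=> <- i; rewrite ffunE.
  by move=> Sz; apply/ffunP => i; rewrite ffunE.
by rewrite !windowE prob_window_shift.
Qed.

Lemma entropy_sym_word_subadditive m n :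
  entropy P (sym_word S (m + n)) <= entropy P (sym_word S m) + entropy P (sym_word S n).
Proof.
pose cat (p : {ffun 'I_m -> A} * {ffun 'I_n -> A}) : {ffun 'I_(m + n) -> A} :=
  [ffun i => match fintype.split i with inl j => p.1 j | inr k => p.2 k end].
rewrite -(entropy_window m n).
apply: le_trans _ (entropy_pair_le P _ _ (measurable_fibers_window 0 m)
  (measurable_fibers_window m n)).
apply: (entropy_factor_le P _ _ cat).
  by apply: measurable_fibers_pair; exact: measurable_fibers_window.
move=> w; apply/ffunP => i; rewrite !ffunE; case: splitP => j ->; by rewrite ffunE.
Qed.

End StationaryBlocks.

Section PrefixRank.
Context {disp : Order.disp_t} {A : finOrderType disp}.
Implicit Types x y : nat -> A.

(* Spelled like [Defs.rank], so that [rank S k w] is convertible to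
   [prefix_rank (path_of S w) k]; [prefix_rankE] trades the classical set for
   a boolean predicate. *)
Definition prefix_rank x k : nat := #|[set i : 'I_k.+1 | (x i <= x k)%O]|.

Lemma prefix_rankE x k : prefix_rank x k = #|[pred i : 'I_k.+1 | (x i <= x k)%O]|.
Proof. by apply: eq_card => i; rewrite inE /=; apply/idP/idP; rewrite in_setE. Qed.

Lemma prefix_rank_le x k : (prefix_rank x k <= k.+1)%N.
Proof. by rewrite -[k.+1]card_ord max_card. Qed.

Lemma eq_prefix_rank x y k : (forall j, (j <= k)%N -> x j = y j) ->
  prefix_rank x k = prefix_rank y k.
Proof.
move=> xy; rewrite !prefix_rankE; apply: eq_card => i; rewrite !inE /= !xy //.
exact: ltnSE (ltn_ord i).
Qed.

Lemma prefix_rank_lt {x y n j} : (forall m, (m < n)%N -> x m = y m) ->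
  (j < n)%N -> y j = y n -> (x n < y n)%O -> (prefix_rank x n < prefix_rank y n)%N.
Proof.
move=> xy jn yj xy_n; rewrite !prefix_rankE; apply/proper_card/properP; split.
  apply/fintype.subsetP => i; rewrite !inE /=.
  have := ltn_ord i; rewrite ltnS leq_eqVlt => /orP[/eqP -> //|i_n].
  by rewrite -xy // => /le_lt_trans/(_ xy_n)/ltW.
have jn1 : (j < n.+1)%N by exact: ltnW.
exists (Ordinal jn1); rewrite !inE /=; first by rewrite yj.
by rewrite -ltNge (xy j jn) yj.
Qed.

Lemma prefix_rank_first_index_not_lt {x y L n} : (n < L)%N ->
  (forall m, (m < n)%N -> x m = y m) ->
  index (y n) (mkseq x L) = index (y n) (mkseq y L) ->
  prefix_rank x n = prefix_rank y n -> ~~ (x n < y n)%O.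
Proof.
move=> nL xy ixy rxy; apply/negP => xy_n.
set j := index (y n) (mkseq y L).
have yn_in : y n \in mkseq y L by rewrite -(nth_mkseq (y n) y nL) mem_nth ?size_mkseq.
have jn : (j <= n)%N by rewrite /j -{1}(nth_mkseq (y n) y nL) index_nth ?size_mkseq.
have yj : y j = y n.
  by rewrite -(nth_mkseq (y n) y (leq_ltn_trans jn nL)) nth_index.
case: (ltngtP j n) jn => [j_n _|//|j_n _].
  by have := prefix_rank_lt xy j_n yj xy_n; rewrite rxy ltnn.
have yn_inx : y n \in mkseq x L by rewrite -index_mem ixy -/j j_n size_mkseq.
have := nth_index (y n) yn_inx; rewrite ixy -/j j_n nth_mkseq // => xyn.
by rewrite xyn ltxx in xy_n.
Qed.

Lemma eq_of_prefix_rank_first_index x y L :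
  (forall k, (k < L)%N -> prefix_rank x k = prefix_rank y k) ->
  (forall a, index a (mkseq x L) = index a (mkseq y L)) ->
  forall k, (k < L)%N -> x k = y k.
Proof.
move=> rxy ixy; elim/ltn_ind => n IH nL.
have xy m : (m < n)%N -> x m = y m by move=> mn; apply: IH => //; exact: ltn_trans nL.
have yx m : (m < n)%N -> y m = x m by move=> /xy.
case: (ltgtP (x n) (y n)) => // [x_lt|y_lt].
  by have := prefix_rank_first_index_not_lt nL xy (ixy _) (rxy n nL); rewrite x_lt.
by have := prefix_rank_first_index_not_lt nL yx (esym (ixy _)) (esym (rxy n nL));
  rewrite y_lt.
Qed.

End PrefixRank.

Section RankWords.
Context {disp : Order.disp_t} {A : finOrderType disp} (a0 : A).

Definition rank_pattern {L} (x : {ffun 'I_L -> A}) : {ffun 'I_L -> 'I_L.+1} :=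
  [ffun i : 'I_L => inord (prefix_rank (nth a0 (fgraph x)) i)].

Definition first_index {L} (x : {ffun 'I_L -> A}) : {ffun A -> 'I_L.+1} :=
  [ffun a => inord (index a (fgraph x))].

Lemma rank_pattern_first_index_inj L :
  injective (fun x : {ffun 'I_L -> A} => (rank_pattern x, first_index x)).
Proof.
move=> x y [/ffunP rxy /ffunP ixy]; apply/ffunP => i.
have szE (z : {ffun 'I_L -> A}) : size (fgraph z) = L by rewrite size_tuple card_ord.
have fgraphE (z : {ffun 'I_L -> A}) : mkseq (nth a0 (fgraph z)) L = fgraph z.
  by rewrite -[RHS](mkseq_nth a0) szE.
have index_lt (z : {ffun 'I_L -> A}) b : (index b (fgraph z) < L.+1)%N.
  by rewrite ltnS -[X in (_ <= X)%N](szE z) index_size.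
rewrite -!(nth_fgraph_ord a0); move: (ltn_ord i); apply: eq_of_prefix_rank_first_index.
  move=> k kL; have := rxy (Ordinal kL); rewrite !ffunE => /(congr1 (@nat_of_ord _)).
  by rewrite !inordK // ltnS (leq_trans (prefix_rank_le _ _)).
move=> a; have := ixy a; rewrite !ffunE !fgraphE => /(congr1 (@nat_of_ord _)).
by rewrite !inordK.
Qed.

Lemma rank_word_pattern {Omega : Type} (S : nat -> Omega -> A) L w :
  rank_word S L w = rank_pattern (sym_word S L w).
Proof.
apply/ffunP => i; rewrite !ffunE; congr inord.
apply: (@eq_prefix_rank _ _ (path_of S w)) => j ji.
have jL : (j < L)%N := leq_ltn_trans ji (ltn_ord i).
by rewrite (nth_fgraph_ord a0 (Ordinal jL)) ffunE.
Qed.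

End RankWords.

Section PermutationEntropy.
Context {R : realType} {d : measure_display} {Omega : measurableType d}
  (P : probability Omega R) {disp : Order.disp_t} {A : finOrderType disp}
  (S : nat -> Omega -> A) (hS : is_source S).

Let a0 : A := S 0%N point.

Lemma rank_word_comp L : rank_word S L = rank_pattern a0 \o sym_word S L.
Proof. by apply/funext => w; exact: rank_word_pattern. Qed.

Lemma entropy_rank_word_le L : entropy P (rank_word S L) <= entropy P (sym_word S L).
Proof. by rewrite rank_word_comp; exact/entropy_comp_le/measurable_fibers_sym_word. Qed.

Lemma entropy_sym_word_le L :
  entropy P (sym_word S L) <= entropy P (rank_word S L) + #|A|%:R * log2 L.+1%:R.
Proof.
have mW := measurable_fibers_sym_word S hS L.
have mF := measurable_fibers_comp _ mW (@first_index _ A L).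
apply: le_trans (entropy_le_inj_comp P _ _ mW (rank_pattern_first_index_inj a0 L)) _.
apply: le_trans (entropy_pair_le P _ _ (measurable_fibers_comp _ mW (rank_pattern a0)) mF) _.
rewrite -rank_word_comp lerD2l (le_trans (entropy_le_log2_card P _ mF)) //.
by rewrite card_ffun !card_ord natrX /log2 lnXn ?ltr0n // mulr_natl mulrnAl.
Qed.

End PermutationEntropy.

Theorem theorem1 (R : realType) (d : measure_display) (Omega : measurableType d)
  (P : probability Omega R) (disp : Order.disp_t) (A : finOrderType disp)
  (S : nat -> Omega -> A) :
  is_source S -> stationary P S -> ergodic P S ->
  exists h : R,
    (fun L : nat => entropy P (rank_word S L.+2) / L.+1%:R) @ \oo --> h /\
    (fun L : nat => entropy P (sym_word S L.+1) / L.+1%:R) @ \oo --> h.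
Proof.
move=> hS hst _.
pose H_sym L := entropy P (sym_word S L); pose H_rank L := entropy P (rank_word S L).
have [h symh] : exists h : R, (fun L => H_sym L.+1 / L.+1%:R) @ \oo --> h.
  apply: (fekete H_sym) => [L|m n]; first exact/entropy_ge0/measurable_fibers_sym_word.
  exact: entropy_sym_word_subadditive.
exists h; split => //.
apply: (cvg_ratio_shift H_rank).
apply: (cvg_ratio_sandwich _ H_rank h (#|A|%:R / ln 2) symh) => L.
  exact: entropy_rank_word_le.
by rewrite mulrAC -mulrA; exact: entropy_sym_word_le.
Qed.
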